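(* Let $n\ge 1$ and $N=\binom{2n}{n}$. There exists a listing $S_0,S_1,\ldots,S_{N-1}$ of all $n$-element subsets of $\{1,2,\ldots,2n\}$ such that (i) $S_{i+N/2}=\{1,\ldots,2n\}\setminus S_i$ for all $0\le i<N/2$, and (ii) for every $i$ (indices taken modulo $N$), $S_{i+1}=(S_i\setminus\{a\})\cup\{b\}$ for some $a\in S_i$, $b\notin S_i$, such that either every integer strictly between $a$ and $b$ belongs to $S_i$, or no integer strictly between $a$ and $b$ belongs to $S_i$.
   Context: Condition (ii) is the ''complementary strong minimal change property'': in terms of incidence vectors, consecutive vectors differ in exactly two bit positions, and the bits strictly between these two positions are all $1$ or all $0$. Condition (i) says the code is complementary. *)

From mathcomp Require Import all_boot.
Set Implicit Arguments. Unset Strict Implicit. Unset Printing Implicit Defensive.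

(* Ground set {1,...,2n} is modelled by 'I_(2n) = {0,...,2n-1} (shift by one,
   order preserving, so "strictly between" is unchanged). *)

Definition strictly_between (a b k : nat) : bool :=
  (minn a b < k) && (k < maxn a b).

Definition csmc_step (m : nat) (S T : {set 'I_m}) : Prop :=
  exists (a b : 'I_m),
    [/\ a \in S, b \notin S, T = (S :\ a) :|: [set b] &
        (forall k : 'I_m, strictly_between a b k -> k \in S) \/
        (forall k : 'I_m, strictly_between a b k -> k \notin S)].

From mathcomp Require Import all_boot zify.
Set Implicit Arguments. Unset Strict Implicit. Unset Printing Implicit Defensive.

(* Encode a subset of {0, ..., m-1} by its 0/1 word of length m.  A minimal change
   step then swaps the two (different) letters at the ends of a constant block.
   The lists [gray m k] and [gray_alt m k] of all words of length m with k ones are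
   built by a reflected recursion on the first letter: both end at 0^(m-k)1^k, and
   they start at 1^k0^(m-k) and 10^(m-k)1^(k-1) respectively, which is exactly what
   is needed for the recursive pieces to be glued by steps.  For m = 2n, the words
   1.w for w in [gray (2n-1) (n-1)] followed by their complements form a cyclic
   listing: the last word 10^n1^(n-1) steps to the complement 00^(n-1)1^n of the
   first one, and complementing this step closes the cycle. *)

Section Walk.
Variables (T : Type) (r : T -> T -> Prop).

Fixpoint walk (s : seq T) (x y : T) : Prop :=
  if s is a :: s' then a = x /\ (if s' is b :: _ then r a b /\ walk s' b y else a = y)
  else False.

Lemma walk_cat s1 s2 x y x' y' :
  walk s1 x y -> walk s2 x' y' -> r y x' -> walk (s1 ++ s2) x y'.
Proof.
elim: s1 x => [|a s1 IH] x //=; case: s1 IH => [|b s1] IH.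
  by case: s2 {IH} => [|b s2] //= [-> ->] [-> w2] r_yx.
by move=> [-> [r_ab w1]] w2 r_yx; split=> //; split => //; apply: IH w2 r_yx.
Qed.

Lemma walk_rev s x y : (forall a b, r a b -> r b a) -> walk s x y -> walk (rev s) y x.
Proof.
move=> r_sym; elim: s x => [|a s IH] x //=; case: s IH => [|b s] IH.
  by move=> [-> ->].
move=> [-> [r_ab w]]; rewrite rev_cons -cats1.
by apply: walk_cat (IH _ w) _ (r_sym _ _ r_ab).
Qed.

Lemma walk_nth s x y x0 i : walk s x y -> i.+1 < size s -> r (nth x0 s i) (nth x0 s i.+1).
Proof.
elim: s x i => [|a s IH] x i //=; case: s IH => [|b s] IH //= [_ [r_ab w]].
by case: i => [|i] //= lt_is; apply: IH w _.
Qed.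

Lemma walk_head s x y x0 : walk s x y -> nth x0 s 0 = x.
Proof. by case: s => [|a s] // []. Qed.

Lemma walk_last s x y x0 : walk s x y -> nth x0 s (size s).-1 = y.
Proof.
by elim: s x => [|a s IH] x //=; case: s IH => [|b s] IH [] // _ [_ /IH].
Qed.

Lemma walk_cycle_nth s x y x0 i : walk s x y -> r y x -> i < size s ->
  r (nth x0 s i) (nth x0 s ((i + 1) %% size s)).
Proof.
move=> w r_yx lt_is; rewrite addn1.
case: (ltnP i.+1 (size s)) => [lt_Si | le_sSi].
  by rewrite modn_small //; apply: walk_nth w _.
have -> : i = (size s).-1 by lia.
by rewrite prednK ?modnn ?(walk_last _ w) ?(walk_head _ w) //; lia.
Qed.

End Walk.

Section WalkMap.
Variables (T U : Type) (r : T -> T -> Prop) (r' : U -> U -> Prop) (f : T -> U).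

Lemma walk_map s x y : (forall a b, r a b -> r' (f a) (f b)) ->
  walk r s x y -> walk r' (map f s) (f x) (f y).
Proof.
move=> hom; elim: s x => [|a s IH] x //=; case: s IH => [|b s] IH; first by move=> [-> ->].
by move=> [-> [r_ab w]]; split => //; split; [apply: hom | apply: IH].
Qed.

End WalkMap.

Definition word_step (u v : seq bool) : Prop :=
  exists (x : seq bool) (c d : bool) (q : nat) (z : seq bool),
    u = x ++ c :: nseq q d ++ ~~ c :: z /\ v = x ++ ~~ c :: nseq q d ++ c :: z.

Lemma word_step_cons b u v : word_step u v -> word_step (b :: u) (b :: v).
Proof. by move=> [x [c [d [q [z [-> ->]]]]]]; exists (b :: x), c, d, q, z. Qed.

Lemma word_step_sym u v : word_step u v -> word_step v u.
Proof. by move=> [x [c [d [q [z [-> ->]]]]]]; exists x, (~~ c), d, q, z; rewrite negbK. Qed.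

Lemma word_step_negb u v : word_step u v -> word_step (map negb u) (map negb v).
Proof.
move=> [x [c [d [q [z [-> ->]]]]]].
exists (map negb x), (~~ c), (~~ d), q, (map negb z).
by split; rewrite map_cat /= map_cat map_nseq /= ?negbK.
Qed.

Lemma nth_block x e (d : bool) q f z i :
  nth false (x ++ e :: nseq q d ++ f :: z) i =
  if i < size x then nth false x i
  else if i == size x then e
  else if i <= size x + q then d
  else if i == size x + q.+1 then f
  else nth false z (i - (size x + q.+2)).
Proof.
rewrite nth_cat; case: ltnP => // le_xi.
case: eqP => [->|ne_xi]; first by rewrite subnn.
have -> : i - size x = (i - size x).-1.+1 by lia.
rewrite /= nth_cat size_nseq nth_nseq.
case: ltnP => iq; first by rewrite ifT //; lia.
rewrite ifF; last by lia.
case: eqP => [e_i|ne]; first by have -> : (i - size x).-1 - q = 0 by lia.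
by have -> : (i - size x).-1 - q = (i - (size x + q.+2)).+1 by lia.
Qed.

Lemma strictly_betweenC a b : strictly_between a b =1 strictly_between b a.
Proof. by move=> k; rewrite /strictly_between minnC maxnC. Qed.

Lemma csmc_step_flip m (S T : {set 'I_m}) (a b : 'I_m) (d : bool) :
  a \in S -> b \notin S ->
  (forall i, (i \in T) = if (i == a) || (i == b) then i \notin S else i \in S) ->
  (forall k : 'I_m, strictly_between a b k -> (k \in S) = d) ->
  csmc_step S T.
Proof.
move=> Sa Sb flip mid; exists a, b; split => //.
  apply/setP => i; rewrite flip !inE.
  by case: eqVneq => [->|_]; case: eqVneq => [->|_] //=; rewrite ?Sa ?Sb ?orbT ?orbF.
by case: d mid => mid; [left|right] => k /mid ->.
Qed.

Definition set_of_word m (w : seq bool) : {set 'I_m} := [set i : 'I_m | nth false w i].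

Lemma word_step_csmc m u v :
  size u = m -> word_step u v -> csmc_step (set_of_word m u) (set_of_word m v).
Proof.
move=> size_u [x [c [d [q [z [def_u def_v]]]]]].
have lt_r : size x + q.+1 < m by rewrite -size_u def_u size_cat /= size_cat size_nseq /=; lia.
have lt_l : size x < m by lia.
pose l := Ordinal lt_l; pose r := Ordinal lt_r.
have between_lr k : strictly_between l r k = (size x < k <= size x + q).
  by rewrite /strictly_between /=; apply/andP/andP; lia.
have flip (i : 'I_m) : (i \in set_of_word m v) =
    if (i == l) || (i == r) then i \notin set_of_word m u else i \in set_of_word m u.
  rewrite !inE def_u def_v !nth_block -!val_eqE /=.
  case: (eqVneq (i : nat) (size x)) => [->|_]; first by rewrite ltnn.
  case: (eqVneq (i : nat) (size x + q.+1)) => [->|_] //=.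
  have [-> ->] : (size x + q.+1 < size x = false) /\ (size x + q.+1 <= size x + q = false).
    by split; lia.
  by rewrite negbK.
have mid (k : 'I_m) : strictly_between l r k -> (k \in set_of_word m u) = d.
  rewrite between_lr inE def_u nth_block => /andP [lt le].
  by rewrite ltnNge ltnW //= gtn_eqF // le.
have in_l : (l \in set_of_word m u) = c by rewrite inE def_u nth_block ltnn eqxx.
have in_r : (r \in set_of_word m u) = ~~ c.
  rewrite inE def_u nth_block /=.
  have [-> -> ->] : [/\ size x + q.+1 < size x = false, (size x + q.+1 == size x) = false
                      & size x + q.+1 <= size x + q = false] by split; lia.
  by rewrite eqxx.
case: c {def_u def_v} in_l in_r => in_l in_r.
  by apply: (csmc_step_flip (a := l) (b := r) _ _ flip mid); rewrite ?in_l ?in_r.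
apply: (csmc_step_flip (a := r) (b := l) (d := d)); rewrite ?in_l ?in_r //.
  by move=> i; rewrite orbC flip.
by move=> k; rewrite strictly_betweenC => /mid.
Qed.

Lemma set_of_word_inj m u v :
  size u = m -> size v = m -> set_of_word m u = set_of_word m v -> u = v.
Proof.
move=> size_u size_v eq_uv; apply: (@eq_from_nth _ false); first by rewrite size_u size_v.
move=> i; rewrite size_u => lt_im.
by have := congr1 (fun S : {set 'I_m} => Ordinal lt_im \in S) eq_uv; rewrite !inE.
Qed.

Lemma card_set_of_word m w : size w = m -> #|set_of_word m w| = count id w.
Proof.
move=> size_w; rewrite cardsE cardE /enum_mem size_filter -enumT.
by rewrite -[in RHS](mkseq_nth false w) /mkseq count_map size_w -val_enum_ord count_map.
Qed.

Lemma set_of_word_negb m w : size w = m -> set_of_word m (map negb w) = ~: set_of_word m w.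
Proof. by move=> size_w; apply/setP => i; rewrite !inE (nth_map false) // size_w. Qed.

Fixpoint gray m k {struct m} : seq (seq bool) :=
  match m, k with
  | _, 0 => [:: nseq m false]
  | 0, _.+1 => [::]
  | m'.+1, k'.+1 => map (cons true) (gray m' k') ++ map (cons false) (gray_alt m' k)
  end
with gray_alt m k {struct m} : seq (seq bool) :=
  match m, k with
  | _, 0 => [:: nseq m false]
  | 0, _.+1 => [::]
  | m'.+1, k'.+1 => map (cons true) (rev (gray m' k')) ++ map (cons false) (gray m' k)
  end.

Lemma size_gray m k : size (gray m k) = 'C(m, k) /\ size (gray_alt m k) = 'C(m, k).
Proof.
elim: m k => [|m IH] [|k] //=.
by rewrite !size_cat !size_map size_rev !(proj1 (IH _)) (proj2 (IH _)) binS addnC.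
Qed.

Lemma gray_nil m k : m < k -> gray m k = [::] /\ gray_alt m k = [::].
Proof.
have [size_g size_a] := size_gray m k.
by move=> lt_mk; split; apply: size0nil; rewrite ?size_g ?size_a bin_small.
Qed.

Definition fixed_weight m k : pred (seq bool) :=
  fun w => (size w == m) && (count id w == k).

Lemma fixed_weight_cons (b : bool) m k :
  preim (cons b) (fixed_weight m.+1 (b + k)) =1 fixed_weight m k.
Proof. by move=> w; rewrite /fixed_weight /= eqSS eqn_add2l. Qed.

Lemma fixed_weight_negb m k w : fixed_weight m k w -> fixed_weight m (m - k) (map negb w).
Proof.
case/andP => /eqP size_w /eqP count_w; rewrite /fixed_weight size_map size_w eqxx /=.
by rewrite count_map -size_w -count_w -(count_predC id w) addKn.
Qed.

Lemma gray_weight m k :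
  all (fixed_weight m k) (gray m k) /\ all (fixed_weight m k) (gray_alt m k).
Proof.
elim: m k => [|m IH] [|k] //=.
  by rewrite andbT /fixed_weight /= size_nseq count_nseq eqxx.
rewrite !all_cat !all_map all_rev.
rewrite !(eq_all (fixed_weight_cons true m k)) !(eq_all (fixed_weight_cons false m k.+1)).
by rewrite !(proj1 (IH _)) (proj2 (IH _)).
Qed.

Lemma uniq_cat_map_cons (s1 s2 : seq (seq bool)) :
  uniq (map (cons true) s1 ++ map (cons false) s2) = uniq s1 && uniq s2.
Proof.
have cons_inj b : injective (@cons bool b) by move=> u v [].
rewrite cat_uniq !map_inj_uniq //.
suff -> : has (mem (map (cons true) s1)) (map (cons false) s2) = false by [].
by apply/negbTE/hasP => [[_ /mapP [? _ ->] /mapP [? _ []]]].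
Qed.

Lemma uniq_gray m k : uniq (gray m k) /\ uniq (gray_alt m k).
Proof.
elim: m k => [|m IH] [|k] //=.
by rewrite !uniq_cat_map_cons rev_uniq !(proj1 (IH _)) (proj2 (IH _)).
Qed.

Lemma cat_nseqS (T : Type) n (x : T) s : nseq n.+1 x ++ s = nseq n x ++ x :: s.
Proof. by elim: n => //= n ->. Qed.

Definition front m k := nseq k true ++ nseq (m - k) false.
Definition back m k := nseq (m - k) false ++ nseq k true.
Definition alt_front m k :=
  if k is k'.+1 then true :: nseq (m - k) false ++ nseq k' true else nseq m false.

Lemma back_S m k : k <= m -> back m.+1 k = false :: back m k.
Proof. by move=> le_km; rewrite /back subSn. Qed.

Lemma gray_walk m k : k <= m ->
  walk word_step (gray m k) (front m k) (back m k) /\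
  walk word_step (gray_alt m k) (alt_front m k) (back m k).
Proof.
have map_walk b s x y : walk word_step s x y ->
    walk word_step (map (cons b) s) (b :: x) (b :: y).
  by move=> w; apply: walk_map w; exact: word_step_cons.
elim: m k => [|m IH] [|k] //= le_km.
  by rewrite /front /back subn0 cats0.
have [walk_F _] := IH k le_km.
case: (ltnP k m) => [lt_km | le_mk]; last first.
  have e_km : k = m by lia.
  subst k; have [-> ->] := gray_nil (ltnSn m).
  rewrite /front /back !subnn /= !cats0 in walk_F *.
  by split; apply: map_walk => //; apply: walk_rev walk_F; exact: word_step_sym.
have [walk_F' walk_G'] := IH k.+1 lt_km.
have gap : m - k = (m - k.+1).+1 by rewrite subnSK.
rewrite back_S //; split.
  apply: walk_cat (map_walk true _ _ _ walk_F) (map_walk false _ _ _ walk_G') _.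
  by rewrite /back gap; exists [::], true, true, 0, (nseq (m - k.+1) false ++ nseq k true).
apply: walk_cat (map_walk true _ _ _ (walk_rev word_step_sym walk_F))
  (map_walk false _ _ _ walk_F') _.
rewrite /front gap cat_nseqS.
by exists [::], true, true, k, (nseq (m - k.+1) false).
Qed.

Definition gray_half k := map (cons true) (gray (2 * k).+1 k).

Definition gray_cycle k := gray_half k ++ map (map negb) (gray_half k).

Lemma central_binS k : 'C(2 * k.+1, k.+1) = 2 * 'C((2 * k).+1, k).
Proof.
have -> : 2 * k.+1 = (2 * k).+2 by rewrite mulnS.
have le_k : k.+1 <= (2 * k).+1 by lia.
rewrite binS -(bin_sub le_k) (_ : (2 * k).+1 - k.+1 = k); last by lia.
by rewrite addnn -mul2n.
Qed.

Lemma size_gray_cycle k : size (gray_cycle k) = 'C(2 * k.+1, k.+1).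
Proof.
by rewrite size_cat !size_map (proj1 (size_gray _ _)) central_binS addnn -mul2n.
Qed.

Lemma nth_gray_cycle_compl k i : i < size (gray_cycle k) %/ 2 ->
  nth [::] (gray_cycle k) (i + size (gray_cycle k) %/ 2) =
  map negb (nth [::] (gray_cycle k) i).
Proof.
have -> : size (gray_cycle k) %/ 2 = size (gray_half k).
  by rewrite size_cat size_map addnn -mul2n mulKn.
by move=> lt_i; rewrite !nth_cat lt_i ltnNge leq_addl /= addnK (nth_map [::]).
Qed.

Lemma gray_cycle_weight k : all (fixed_weight (2 * k.+1) k.+1) (gray_cycle k).
Proof.
have weight_half : all (fixed_weight (2 * k.+1) k.+1) (gray_half k).
  by rewrite all_map mulnS (eq_all (fixed_weight_cons true _ k)) (proj1 (gray_weight _ _)).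
rewrite all_cat weight_half all_map /=.
apply: sub_all weight_half => w /fixed_weight_negb.
by rewrite /preim (_ : 2 * k.+1 - k.+1 = k.+1) //; lia.
Qed.

Lemma uniq_gray_cycle k : uniq (gray_cycle k).
Proof.
have uniq_half : uniq (gray_half k).
  by rewrite map_inj_uniq ?(proj1 (uniq_gray _ _)) // => u v [].
rewrite cat_uniq uniq_half map_inj_uniq ?uniq_half ?andbT /=; last exact: can_inj (mapK negbK).
by apply/hasP => [[_ /mapP [_ /mapP [u _ ->] ->] /mapP [v _ []]]].
Qed.

Lemma gray_cycle_step k i : i < size (gray_cycle k) ->
  word_step (nth [::] (gray_cycle k) i)
            (nth [::] (gray_cycle k) ((i + 1) %% size (gray_cycle k))).
Proof.
pose m := (2 * k).+1.
have le_km : k <= m by lia.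
have [walk_F _] := gray_walk le_km.
have walk_half : walk word_step (gray_half k) (true :: front m k) (true :: back m k).
  by apply: walk_map walk_F; exact: word_step_cons.
have junction : word_step (true :: back m k) (map negb (true :: front m k)).
  rewrite /back /front (_ : m - k = k.+1); last by lia.
  rewrite /= map_cat !map_nseq /= map_nseq; exists [::], true, false, k, (nseq k true).
  by split; rewrite /= -?cat_nseqS.
move=> lt_i; apply: walk_cycle_nth lt_i.
  exact: walk_cat walk_half (walk_map word_step_negb walk_half) junction.
by have := word_step_negb junction; rewrite (mapK negbK).
Qed.
Lemma uniq_card_mem (T : finType) (s : seq T) (A : {pred T}) :
  uniq s -> {subset s <= A} -> #|A| <= size s -> s =i A.
Proof.
move=> uniq_s sub_sA; rewrite cardE => le_As.
have sub_enum : {subset s <= enum A} by move=> x /sub_sA; rewrite mem_enum.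
have [_ eq_s] := uniq_min_size uniq_s sub_enum le_As.
by move=> x; rewrite eq_s mem_enum.
Qed.

Theorem theorem6 (n : nat) : 1 <= n ->
  let N := 'C(2 * n, n) in
  exists L : seq {set 'I_(2 * n)},
    [/\ size L = N, uniq L,
        (forall S : {set 'I_(2 * n)}, (S \in L) = (#|S| == n)),
        (forall i, i < N %/ 2 ->
           nth set0 L (i + N %/ 2) = ~: nth set0 L i) &
        (forall i, i < N ->
           csmc_step (nth set0 L i) (nth set0 L ((i + 1) %% N)))].
Proof.
case: n => // k _ N; pose W := gray_cycle k.
have size_W : size W = N := size_gray_cycle k.
have weight_W w : w \in W -> fixed_weight (2 * k.+1) k.+1 w := allP (gray_cycle_weight k) w.
have size_w w : w \in W -> size w = 2 * k.+1 by case/weight_W/andP => /eqP.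
pose L := map (set_of_word (2 * k.+1)) W.
have nth_L i : i < N -> nth set0 L i = set_of_word _ (nth [::] W i).
  by move=> lt_iN; rewrite (nth_map [::]) ?size_W.
have W_i i : i < N -> nth [::] W i \in W by move=> lt_iN; rewrite mem_nth ?size_W.
have uniq_L : uniq L.
  rewrite map_inj_in_uniq ?uniq_gray_cycle // => u v /size_w ? /size_w ?.
  exact: set_of_word_inj.
exists L; split => //.
- by rewrite size_map.
- move=> S; rewrite (@uniq_card_mem _ _ [set S : {set _} | #|S| == k.+1]) ?inE //.
  + move=> _ /mapP [w w_W ->]; rewrite inE card_set_of_word ?size_w //.
    by case/weight_W/andP: w_W.
  + by rewrite card_draws card_ord size_map size_W.
- move=> i lt_i; have [lt_iN lt_jN] : i < N /\ i + N %/ 2 < N by lia.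
  rewrite !nth_L // -size_W nth_gray_cycle_compl ?size_W // set_of_word_negb //.
  exact/size_w/W_i.
- have N_gt0 : 0 < N by rewrite bin_gt0; lia.
  move=> i lt_iN; rewrite !nth_L ?ltn_pmod //.
  apply: word_step_csmc (size_w _ (W_i _ lt_iN)) _.
  by rewrite -size_W; apply: gray_cycle_step; rewrite size_W.
Qed.
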